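(* Let $\mathcal{G}$ be an MVPP optional-grabbing pawn game with pawns $[d]$, let $\langle v,P\rangle$ be a configuration, let $j\in[d]$ be the pawn with $v\in V_j$, and let $P'\subseteq P$. (1) If ($j\in P$ implies $j\in P'$) and Player 1 wins from $\langle v,P\rangle$, then Player 1 wins from $\langle v,P'\rangle$. (2) If ($j\notin P'$ implies $j\notin P$) and Player 2 wins from $\langle v,P'\rangle$, then Player 2 wins from $\langle v,P\rangle$.
   Context: A pawn game with $d$ pawns consists of a finite directed graph $(V,E)$, a target set $T\subseteq V$, and sets $V_1,\dots,V_d\subseteq V$, where Pawn $j$ owns the vertices in $V_j$. In an MVPP (multiple vertices per pawn) game, $V_1,\dots,V_d$ form a partition of $V$. A configuration is a pair $\langle v,P\rangle$ with $v\in V$ the token position and $P\subseteq[d]$ the set of pawns controlled by Player 1 (Player 2 controls the rest). At $\langle v,P\rangle$, Player 1 moves the token iff he controls the pawn owning $v$; otherwise Player 2 moves. The mover moves the token to some $u$ with $(v,u)\in E$. Under optional grabbing, after Player $i$ moves, the other player may either leave pawn control unchanged or take one pawn currently controlled by Player $i$ into his own control. Player 1 wins a play iff it visits $T$; otherwise Player 2 wins. A player wins from a configuration if he has a strategy winning against all opponent strategies. *)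

From mathcomp Require Import all_boot.
Set Implicit Arguments. Unset Strict Implicit. Unset Printing Implicit Defensive.

Section PawnGame.
Variables (V : finType) (d : nat).
Variables (E : rel V) (T : {set V}) (Vs : 'I_d -> {set V}).

(* A configuration <v, P>: token position and set of pawns controlled by Player 1. *)
Definition cfg := (V * {set 'I_d})%type.

Definition mvpp_partition : Prop := forall v : V, exists! j : 'I_d, v \in Vs j.

Definition p1_moves (c : cfg) : bool := [exists j, (c.1 \in Vs j) && (j \in c.2)].

(* A (history-dependent) strategy of a player:
   - smove h c   : the vertex the player moves the token to, when it is his turn
                   at current configuration c after history h (earlier configurations);
   - sgrab h c u : after the opponent moved the token from configuration c to u,
                   either None (leave control unchanged) or Some k (grab pawn k). *)
Record strategy := Strategy {
  smove : seq cfg -> cfg -> V;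
  sgrab : seq cfg -> cfg -> V -> option 'I_d }.

Definition legal1 (s : strategy) : Prop :=
  (forall h c, E c.1 (smove s h c)) /\
  (forall h c u k, sgrab s h c u = Some k -> k \notin c.2).
Definition legal2 (s : strategy) : Prop :=
  (forall h c, E c.1 (smove s h c)) /\
  (forall h c u k, sgrab s h c u = Some k -> k \in c.2).

Definition step (s1 s2 : strategy) (h : seq cfg) (c : cfg) : cfg :=
  if p1_moves c then
    let u := smove s1 h c in
    (u, match sgrab s2 h c u with Some k => c.2 :\ k | None => c.2 end)
  else
    let u := smove s2 h c in
    (u, match sgrab s1 h c u with Some k => k |: c.2 | None => c.2 end).

(* run n = (history before round n, configuration at round n). *)
Fixpoint run (s1 s2 : strategy) (c0 : cfg) (n : nat) : seq cfg * cfg :=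
  match n with
  | 0 => ([::], c0)
  | n'.+1 => let hc := run s1 s2 c0 n' in (rcons hc.1 hc.2, step s1 s2 hc.1 hc.2)
  end.

Definition visits_T (s1 s2 : strategy) (c0 : cfg) : Prop :=
  exists n, (run s1 s2 c0 n).2.1 \in T.

Definition wins1 (c0 : cfg) : Prop :=
  exists s1, legal1 s1 /\ forall s2, legal2 s2 -> visits_T s1 s2 c0.

Definition wins2 (c0 : cfg) : Prop :=
  exists s2, legal2 s2 /\ forall s1, legal1 s1 -> ~ visits_T s1 s2 c0.

End PawnGame.

From mathcomp Require Import all_boot.
Set Implicit Arguments. Unset Strict Implicit. Unset Printing Implicit Defensive.

(** Player 1 starting with fewer pawns plays by imagining a play from the
    configuration with more pawns and copying his winning strategy there.  The
    two plays keep the token on the same vertex, the real pawn set inside the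
    imagined one, and the same player to move.  The last invariant can only
    break right after a move, at the owner of the new vertex; it is restored
    either by letting the imagined opponent grab that pawn back (after a
    Player 1 move) or by letting Player 1 grab it in the real play (after a
    Player 2 move).  Complementing pawn sets swaps the roles of the players,
    and turns part (2) into part (1) of the swapped game. *)

Section PawnGameSimulation.
Variables (V : finType) (d : nat) (E : rel V) (Vs : 'I_d -> {set V}).
Hypothesis Vs_partition : mvpp_partition Vs.
Hypothesis E_total : forall x : V, exists y, E x y.

Local Notation config := (cfg V d).
Local Notation strat := (strategy V d).

Definition track (s1 s2 : strat) (c0 : config) (n : nat) : V :=
  (run Vs s1 s2 c0 n).2.1.

Lemma size_run s1 s2 c0 n : size (run Vs s1 s2 c0 n).1 = n.
Proof. by elim: n => //= n IHn; rewrite size_rcons IHn. Qed.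

Lemma p1_movesE y j A : y \in Vs j -> p1_moves Vs (y, A) = (j \in A).
Proof.
move=> yj; have [j' [_ owner_uniq]] := Vs_partition y.
apply/existsP/idP => [[k /andP[yk kA]]|jA]; last by exists j; rewrite yj.
by rewrite -(owner_uniq j yj) (owner_uniq k yk).
Qed.

Definition owner_in (y : V) (A : {set 'I_d}) : option 'I_d :=
  [pick k in A | y \in Vs k].

Lemma owner_in_mem y A k : owner_in y A = Some k -> k \in A.
Proof. by rewrite /owner_in; case: pickP => // k' /andP[k'A _] [<-]. Qed.

Lemma owner_inE y j A : y \in Vs j -> owner_in y A = if j \in A then Some j else None.
Proof.
move=> yj; have [j' [_ owner_uniq]] := Vs_partition y.
rewrite /owner_in; case: pickP => [k /andP[kA yk] | no_owner].
  have <- : k = j by rewrite -(owner_uniq k yk) -(owner_uniq j yj).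
  by rewrite kA.
by case: ifP => // jA; move: (no_owner j); rewrite jA yj.
Qed.

Definition lower_at (y : V) (Q R : {set 'I_d}) : {set 'I_d} :=
  if owner_in y (Q :\: R) is Some k then Q :\ k else Q.

Definition raise_at (y : V) (Q R : {set 'I_d}) : {set 'I_d} :=
  if owner_in y (Q :\: R) is Some k then k |: R else R.

Lemma lower_atP y (Q R : {set 'I_d}) : R \subset Q ->
  R \subset lower_at y Q R /\ p1_moves Vs (y, lower_at y Q R) = p1_moves Vs (y, R).
Proof.
move=> RQ; have [j [yj _]] := Vs_partition y.
rewrite /lower_at (owner_inE _ yj) !(p1_movesE _ yj) in_setD.
case: (boolP (j \in R)) => [jR | jNR] /=; first by rewrite (subsetP RQ j jR).
case: (boolP (j \in Q)) => [jQ | jNQ] /=; last by rewrite (negbTE jNQ).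
by rewrite subsetD1 RQ jNR setD11.
Qed.

Lemma raise_atP y (Q R : {set 'I_d}) : R \subset Q ->
  raise_at y Q R \subset Q /\ p1_moves Vs (y, raise_at y Q R) = p1_moves Vs (y, Q).
Proof.
move=> RQ; have [j [yj _]] := Vs_partition y.
rewrite /raise_at (owner_inE _ yj) !(p1_movesE _ yj) in_setD.
case: (boolP (j \in R)) => [jR | jNR] /=; first by rewrite (subsetP RQ j jR).
case: (boolP (j \in Q)) => [jQ | jNQ] /=; last by rewrite (negbTE jNR).
by split; rewrite ?setU11 // subUset sub1set jQ RQ.
Qed.

Definition successor (x : V) : V := odflt x [pick y | E x y].

Lemma successorP x : E x (successor x).
Proof.
rewrite /successor; case: pickP => //= no_succ.
by have [y] := E_total x; rewrite no_succ.
Qed.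

Section Replay.
Variable upd : seq config -> config -> config -> {set 'I_d}.

Fixpoint replay (h : seq config) (c : config) (xs : seq config) : seq config * config :=
  if xs is x :: xs' then replay (rcons h c) (x.1, upd h c x) xs' else (h, c).

(* Strategies only see histories, so the imagined play is recomputed from the
   whole real history at every turn. *)
Definition shadow (P0 : {set 'I_d}) (h : seq config) (c : config) : seq config * config :=
  replay [::] ((head c h).1, P0) (behead (rcons h c)).

Lemma replay_rcons h c xs x :
  replay h c (rcons xs x) =
  (rcons (replay h c xs).1 (replay h c xs).2,
   (x.1, upd (replay h c xs).1 (replay h c xs).2 x)).
Proof. by elim: xs h c => //= y xs IHxs h c; rewrite IHxs. Qed.

Lemma shadow_rcons P0 h c x :
  shadow P0 (rcons h c) x =
  (rcons (shadow P0 h c).1 (shadow P0 h c).2,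
   (x.1, upd (shadow P0 h c).1 (shadow P0 h c).2 x)).
Proof. by case: h => [|y h] //; rewrite /shadow /= replay_rcons. Qed.

Lemma shadow_pos P0 h c : (shadow P0 h c).2.1 = c.1.
Proof. by elim/last_ind: h c => [|h y _] c //; rewrite shadow_rcons. Qed.

End Replay.

Section Simulation.
Variables (P P' : {set 'I_d}) (v : V).
Hypothesis subP : P' \subset P.
Hypothesis same_mover : p1_moves Vs (v, P) = p1_moves Vs (v, P').
Variable s1 : strat.
Hypothesis s1_legal : legal1 E s1.

Definition s1_grab (h : seq config) (c : config) (u : V) : {set 'I_d} :=
  if sgrab s1 h c u is Some k then k |: c.2 else c.2.

Definition shadow_upd (h : seq config) (c x : config) : {set 'I_d} :=
  if p1_moves Vs c then lower_at x.1 c.2 x.2 else s1_grab h c x.1.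

Local Notation shadow1 := (shadow shadow_upd P).

Definition s1_sim : strat := Strategy
  (fun h c => smove s1 (shadow1 h c).1 (shadow1 h c).2)
  (fun h c u => owner_in u (s1_grab (shadow1 h c).1 (shadow1 h c).2 u :\: c.2)).

Lemma s1_sim_legal : legal1 E s1_sim.
Proof.
split=> [h c | h c u k /owner_in_mem]; last by rewrite in_setD => /andP[].
by rewrite /= -{1}(shadow_pos shadow_upd P h c); apply: s1_legal.1.
Qed.

Variable s2' : strat.
Hypothesis s2'_legal : legal2 E s2'.

Local Notation real n := (run Vs s1_sim s2' (v, P') n).

(* The imagined opponent copies the real opponent's next move; it is only ever
   played from the imagined play, where that move is legal, so the fallback to
   [successor] just makes it a legal strategy everywhere. *)
Definition s2_sim : strat := Strategy
  (fun h c => let u := (real (size h).+1).2.1 in if E c.1 u then u else successor c.1)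
  (fun h c u => owner_in u (c.2 :\: (real (size h).+1).2.2)).

Lemma s2_sim_legal : legal2 E s2_sim.
Proof.
split=> [h c | h c u k /owner_in_mem]; last by rewrite in_setD => /andP[].
by rewrite /=; case: ifP => // _; apply: successorP.
Qed.

Lemma step_sim h c h' c' u R :
  real (size h) = (h', c') -> shadow1 h' c' = (h, c) ->
  c'.2 \subset c.2 -> p1_moves Vs c = p1_moves Vs c' ->
  step Vs s1_sim s2' h' c' = (u, R) ->
  [/\ step Vs s1 s2_sim h c = (u, shadow_upd h c (u, R)),
      R \subset shadow_upd h c (u, R)
    & p1_moves Vs (u, shadow_upd h c (u, R)) = p1_moves Vs (u, R)].
Proof.
move=> real_h sh sub mover real_step.
rewrite /shadow_upd {1}/step mover /= real_h /= real_step.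
case: (boolP (p1_moves Vs c')) => [p1c' | p2c'];
  move: real_step; rewrite /step ?p1c' ?(negbTE p2c') /= sh.
  case=> <-{u} R_def; have R_sub : R \subset c'.2.
    by rewrite -R_def; case: sgrab => // k; apply: subD1set.
  by have [] := lower_atP (smove s1 h c) (subset_trans R_sub sub).
have pos : c.1 = c'.1 by rewrite -(shadow_pos shadow_upd P h' c') sh.
case=> <-{u} <-{R}; rewrite pos (s2'_legal.1 h' c').
have sub_grab : c'.2 \subset s1_grab h c (smove s2' h' c').
  by rewrite /s1_grab; case: sgrab => [k|] //; apply: subset_trans sub (subsetUr _ _).
by have [] := raise_atP (smove s2' h' c') sub_grab.
Qed.

Lemma shadow_run n :
  let r := run Vs s1 s2_sim (v, P) n in
  [/\ shadow1 (real n).1 (real n).2 = r, (real n).2.2 \subset r.2.2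
     & p1_moves Vs r.2 = p1_moves Vs (real n).2].
Proof.
elim: n => [|n]; first by split.
have := size_run s1 s2_sim (v, P) n; rewrite /=.
case: (run Vs s1 s2_sim _ n) => h c /= size_h.
case real_n: (real n) => [h' c'] /= [sh sub mover].
rewrite -size_h in real_n; case real_step: (step Vs s1_sim s2' h' c') => [u R].
have [-> R_sub mover'] := step_sim real_n sh sub mover real_step.
by rewrite shadow_rcons sh.
Qed.

Lemma track_sim : track s1 s2_sim (v, P) =1 track s1_sim s2' (v, P').
Proof.
move=> n; have [sh _ _] := shadow_run n.
by rewrite /track -sh shadow_pos.
Qed.

End Simulation.

Lemma p1_strategy_transfer (P P' : {set 'I_d}) v :
  P' \subset P -> p1_moves Vs (v, P) = p1_moves Vs (v, P') ->
  forall s1, legal1 E s1 ->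
  exists2 s1', legal1 E s1' &
    forall s2', legal2 E s2' ->
    exists2 s2, legal2 E s2 & track s1 s2 (v, P) =1 track s1' s2' (v, P').
Proof.
move=> subP mover s1 s1_legal.
exists (s1_sim P s1); first exact: s1_sim_legal.
move=> s2' s2'_legal; exists (s2_sim P P' v s1 s2'); first exact: s2_sim_legal.
exact: track_sim.
Qed.

Definition swap_cfg (c : config) : config := (c.1, ~: c.2).

Lemma swap_cfgK : involutive swap_cfg.
Proof. by case=> x A; rewrite /swap_cfg setCK. Qed.

Lemma p1_moves_swap c : p1_moves Vs (swap_cfg c) = ~~ p1_moves Vs c.
Proof.
have [j [cj _]] := Vs_partition c.1.
by case: c cj => x A /= xj; rewrite !(p1_movesE _ xj) in_setC.
Qed.

Definition swap_strategy (s : strat) : strat := Strategy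
  (fun h c => smove s (map swap_cfg h) (swap_cfg c))
  (fun h c u => sgrab s (map swap_cfg h) (swap_cfg c) u).

Definition swapped (s s' : strat) : Prop :=
  forall h c, smove s' (map swap_cfg h) (swap_cfg c) = smove s h c /\
              forall u, sgrab s' (map swap_cfg h) (swap_cfg c) u = sgrab s h c u.

Lemma swapped_swap s : swapped s (swap_strategy s).
Proof. by move=> h c; rewrite /= swap_cfgK (mapK swap_cfgK). Qed.

Lemma swap_swapped s : swapped (swap_strategy s) s.
Proof. by []. Qed.

Lemma legal1_swap s : legal2 E s -> legal1 E (swap_strategy s).
Proof.
case=> s_move s_grab; split=> [h c | h c u k /s_grab]; last by rewrite in_setC.
exact: s_move (map swap_cfg h) (swap_cfg c).
Qed.

Lemma legal2_swap s : legal1 E s -> legal2 E (swap_strategy s).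
Proof.
case=> s_move s_grab; split=> [h c | h c u k /s_grab]; last by rewrite in_setC negbK.
exact: s_move (map swap_cfg h) (swap_cfg c).
Qed.

Lemma step_swapped a a' b b' h c : swapped a a' -> swapped b b' ->
  step Vs b' a' (map swap_cfg h) (swap_cfg c) = swap_cfg (step Vs a b h c).
Proof.
move=> aa' bb'; have [a_move a_grab] := aa' h c; have [b_move b_grab] := bb' h c.
rewrite /step p1_moves_swap; case: (p1_moves Vs c) => /=.
  rewrite a_move b_grab; case: sgrab => [k|] //.
  by congr pair; apply/setP => i; rewrite !inE negb_and negbK orbC.
rewrite b_move a_grab; case: sgrab => [k|] //.
by congr pair; apply/setP => i; rewrite !inE negb_or.
Qed.

Lemma track_swapped a a' b b' c0 : swapped a a' -> swapped b b' ->
  track b' a' (swap_cfg c0) =1 track a b c0.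
Proof.
move=> aa' bb' n; suff run_swap : run Vs b' a' (swap_cfg c0) n =
  (map swap_cfg (run Vs a b c0 n).1, swap_cfg (run Vs a b c0 n).2).
  by rewrite /track run_swap.
by elim: n => // n IHn; rewrite /= IHn map_rcons (step_swapped _ _ aa' bb').
Qed.

Lemma p2_strategy_transfer (P P' : {set 'I_d}) v :
  P' \subset P -> p1_moves Vs (v, P) = p1_moves Vs (v, P') ->
  forall s2', legal2 E s2' ->
  exists2 s2, legal2 E s2 &
    forall s1, legal1 E s1 ->
    exists2 s1', legal1 E s1' & track s1 s2 (v, P) =1 track s1' s2' (v, P').
Proof.
move=> subP mover s2' s2'_legal.
have subC : ~: P \subset ~: P' by rewrite setCS.
have moverC : p1_moves Vs (v, ~: P') = p1_moves Vs (v, ~: P).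
  by rewrite -[(v, ~: P)]/(swap_cfg (v, P)) -[(v, ~: P')]/(swap_cfg (v, P')) !p1_moves_swap mover.
have [t1 t1_legal sim] := p1_strategy_transfer subC moverC (legal1_swap s2'_legal).
exists (swap_strategy t1); first exact: legal2_swap.
move=> s1 s1_legal; have [t2 t2_legal same] := sim _ (legal2_swap s1_legal).
exists (swap_strategy t2); first exact: legal1_swap.
move=> n; rewrite -(track_swapped _ (swapped_swap s1) (swap_swapped t1)).
by rewrite -same (track_swapped (v, P') (swap_swapped t2) (swapped_swap s2')).
Qed.

Lemma visits_T_track (T : {set V}) s1 s2 c0 s1' s2' c0' :
  track s1 s2 c0 =1 track s1' s2' c0' ->
  visits_T T Vs s1 s2 c0 -> visits_T T Vs s1' s2' c0'.
Proof. by move=> same [n visit]; exists n; rewrite -[_.2.1]/(track _ _ _ n) -same. Qed.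

Lemma wins1_subset_pawns T (P P' : {set 'I_d}) v :
  P' \subset P -> p1_moves Vs (v, P) = p1_moves Vs (v, P') ->
  wins1 E T Vs (v, P) -> wins1 E T Vs (v, P').
Proof.
move=> subP mover [s1 [s1_legal s1_wins]].
have [s1' s1'_legal sim] := p1_strategy_transfer subP mover s1_legal.
exists s1'; split=> // s2' s2'_legal; have [s2 s2_legal same] := sim s2' s2'_legal.
exact: visits_T_track same (s1_wins s2 s2_legal).
Qed.

Lemma wins2_superset_pawns T (P P' : {set 'I_d}) v :
  P' \subset P -> p1_moves Vs (v, P) = p1_moves Vs (v, P') ->
  wins2 E T Vs (v, P') -> wins2 E T Vs (v, P).
Proof.
move=> subP mover [s2' [s2'_legal s2'_wins]].
have [s2 s2_legal sim] := p2_strategy_transfer subP mover s2'_legal.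
exists s2; split=> // s1 s1_legal; have [s1' s1'_legal same] := sim s1 s1_legal.
by move=> /(visits_T_track same); apply: s2'_wins.
Qed.

End PawnGameSimulation.

Theorem theorem5 (V : finType) (d : nat) (E : rel V) (T : {set V})
    (Vs : 'I_d -> {set V})
    (Hpart : mvpp_partition Vs)
    (Htotal : forall v : V, exists u : V, E v u)
    (v : V) (P : {set 'I_d}) (j : 'I_d) (P' : {set 'I_d})
    (Hj : v \in Vs j) (HP' : P' \subset P) :
  (((j \in P) -> (j \in P')) -> wins1 E T Vs (v, P) -> wins1 E T Vs (v, P')) /\
  (((j \notin P') -> (j \notin P)) -> wins2 E T Vs (v, P') -> wins2 E T Vs (v, P)).
Proof.
have same_mover : (j \in P -> j \in P') -> p1_moves Vs (v, P) = p1_moves Vs (v, P').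
  by move=> jPP'; rewrite !(p1_movesE Hpart _ Hj); apply/idP/idP => [/jPP' | /(subsetP HP')].
split=> jPP'.
  exact/(wins1_subset_pawns Hpart Htotal HP')/same_mover.
exact/(wins2_superset_pawns Hpart Htotal HP')/same_mover/contraTT.
Qed.
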